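(* Let $\mathscr{P}=(P^j_{B_1'B_2'})_{j=1}^d$ be a projective measurement on finite-dimensional $\mathcal{H}_{B_1'}\otimes\mathcal{H}_{B_2'}$ and $\mathscr{F}=(F^j_{B_1B_2})_{j=1}^d$ a POVM on finite-dimensional $\mathcal{H}_{B_1}\otimes\mathcal{H}_{B_2}$. Then $Q(\mathscr{F},\mathscr{P})\le1$, and if $Q(\mathscr{F},\mathscr{P})=1$ then there exist completely positive unital maps $\Lambda_{B_1}:\mathcal{L}(\mathcal{H}_{B_1})\to\mathcal{L}(\mathcal{H}_{B_1'})$, $\Lambda_{B_2}:\mathcal{L}(\mathcal{H}_{B_2})\to\mathcal{L}(\mathcal{H}_{B_2'})$ such that $(\Lambda_{B_1}\otimes\Lambda_{B_2})(F^j_{B_1B_2})=P^j_{B_1'B_2'}$ for every $j$.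
   Context: $Q(\mathscr{F},\mathscr{P}):=\frac{1}{|B_1'||B_2'|}\max_{\Lambda_{B_1},\Lambda_{B_2}}\sum_{j=1}^d\operatorname{tr}\big[(\Lambda_{B_1}\otimes\Lambda_{B_2})(F^j_{B_1B_2})P^j_{B_1'B_2'}\big]$, maximized over completely positive unital maps $\Lambda_{B_i}:\mathcal{L}(\mathcal{H}_{B_i})\to\mathcal{L}(\mathcal{H}_{B_i'})$; $|X|$ is the dimension of $\mathcal{H}_X$. *)

From HB Require Import structures.
From mathcomp Require Import all_boot all_order all_algebra.
Set Implicit Arguments. Unset Strict Implicit. Unset Printing Implicit Defensive.
Import Order.TTheory GRing.Theory Num.Theory.
Local Open Scope ring_scope.

Section QDefs.
Variable C : numClosedFieldType.

Definition adjmx m n (A : 'M[C]_(m, n)) : 'M[C]_(n, m) :=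
  (map_mx (fun x => x^*) A)^T.

Definition psdmx n (A : 'M[C]_n) : Prop :=
  forall v : 'cV[C]_n, 0 <= (adjmx v *m A *m v) 0 0.

(* Kronecker (tensor) product of matrices; the basis of H_1 (x) H_2 is
   indexed by mxvec_index i k : 'I_(m1 * m2). *)
Definition kronmx m1 n1 m2 n2 (A : 'M[C]_(m1, n1)) (B : 'M[C]_(m2, n2))
  : 'M[C]_(m1 * m2, n1 * n2) :=
  \sum_(i < m1) \sum_(j < n1) \sum_(k < m2) \sum_(l < n2)
     (A i j * B k l) *: delta_mx (mxvec_index i k) (mxvec_index j l).

(* (L1 (x) L2)(X), determined by linearity on the basis E_ij (x) E_kl *)
Definition tens_map m1 n1 m2 n2 (L1 : 'M[C]_m1 -> 'M[C]_n1)
  (L2 : 'M[C]_m2 -> 'M[C]_n2) (X : 'M[C]_(m1 * m2)) : 'M[C]_(n1 * n2) :=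
  \sum_(i < m1) \sum_(j < m1) \sum_(k < m2) \sum_(l < m2)
     X (mxvec_index i k) (mxvec_index j l) *:
       kronmx (L1 (delta_mx i j)) (L2 (delta_mx k l)).

Definition completely_positive m n (L : 'M[C]_m -> 'M[C]_n) : Prop :=
  forall (k : nat) (X : 'M[C]_(k * m)),
    psdmx X -> psdmx (tens_map (@id 'M[C]_k) L X).

Definition unital m n (L : 'M[C]_m -> 'M[C]_n) : Prop := L 1%:M = 1%:M.

Definition cp_unital m n (L : 'M[C]_m -> 'M[C]_n) : Prop :=
  completely_positive L /\ unital L.

Definition is_POVM n d (F : 'I_d -> 'M[C]_n) : Prop :=
  (forall j, psdmx (F j)) /\ \sum_(j < d) F j = 1%:M.

Definition is_projective_measurement n d (P : 'I_d -> 'M[C]_n) : Prop :=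
  (forall j, adjmx (P j) = P j /\ P j *m P j = P j) /\ \sum_(j < d) P j = 1%:M.

(* the objective of Q(F,P) for given maps L1, L2 *)
Definition Qval b1 b2 b1' b2' d (F : 'I_d -> 'M[C]_(b1 * b2))
  (P : 'I_d -> 'M[C]_(b1' * b2'))
  (L1 : 'M[C]_b1 -> 'M[C]_b1') (L2 : 'M[C]_b2 -> 'M[C]_b2') : C :=
  ((b1' * b2')%:R)^-1 * \sum_(j < d) \tr (tens_map L1 L2 (F j) *m P j).

End QDefs.

(* Since Λ₁ ⊗ Λ₂ is positive and unital, A_j := (Λ₁ ⊗ Λ₂)(F_j) is again a
   POVM, on H_{B1'} ⊗ H_{B2'}.  For a POVM A and a projective measurement P
   on an n-dimensional space, Σ_j tr(A_j P_j) = n - Σ_j tr(A_j (1 - P_j)),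
   and each tr(A_j (1 - P_j)) is nonnegative, being the trace of a positive
   operator against a projector; hence Q ≤ 1.  If Q = 1 all these traces
   vanish, so A_j (1 - P_j) = 0, i.e. A_j P_j = A_j.  The projectors P_j are
   mutually orthogonal, so P_k = Σ_j A_j P_k = A_k P_k = A_k. *)

From HB Require Import structures.
From mathcomp Require Import all_boot all_order all_algebra.
From mathcomp Require Import ring.
Import Order.TTheory GRing.Theory Num.Theory.
Set Implicit Arguments. Unset Strict Implicit. Unset Printing Implicit Defensive.
Local Open Scope ring_scope.

Section TensorMaps.
Variable C : numClosedFieldType.

Lemma eq_mxvec_index m n (i j : 'I_m) (k l : 'I_n) :
  (mxvec_index i k == mxvec_index j l) = (i == j) && (k == l).
Proof.
apply/eqP/andP => [E|[/eqP-> /eqP->]] //.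
have [g gK _] := @curry_mxvec_bij m n.
have := gK (i, k) isT; have := gK (j, l) isT => /= Ejl Eik.
by move: Eik; rewrite E Ejl => -[-> ->].
Qed.

Lemma sum_mxvec_index m n (G : 'I_(m * n) -> C) :
  \sum_p G p = \sum_i \sum_k G (mxvec_index i k).
Proof.
rewrite (reindex (uncurry (@mxvec_index m n))) /=; last first.
  apply: onW_bij; have [g g1 g2] := @curry_mxvec_bij m n.
  by exists g => x; [apply: g1 | apply: g2].
by rewrite pair_big /=; apply: eq_bigr => -[].
Qed.

Lemma big_only (I : finType) (i0 : I) (G : I -> C) :
  (forall i, i != i0 -> G i = 0) -> \sum_i G i = G i0.
Proof. by move=> G0; rewrite (bigD1 i0) //= big1 ?addr0 // => i /G0. Qed.

Lemma kronmxE m1 n1 m2 n2 (A : 'M[C]_(m1, n1)) (B : 'M[C]_(m2, n2)) i j k l :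
  kronmx A B (mxvec_index i k) (mxvec_index j l) = A i j * B k l.
Proof.
rewrite /kronmx summxE (big_only (i0 := i)) => [|a /negbTE ai]; last first.
  rewrite summxE big1 // => b _; rewrite summxE big1 // => c _.
  rewrite summxE big1 // => e _.
  by rewrite !mxE !eq_mxvec_index [i == a]eq_sym ai mulr0.
rewrite summxE (big_only (i0 := j)) => [|b /negbTE bj]; last first.
  rewrite summxE big1 // => c _; rewrite summxE big1 // => e _.
  by rewrite !mxE !eq_mxvec_index [j == b]eq_sym bj andbF mulr0.
rewrite summxE (big_only (i0 := k)) => [|c /negbTE ck]; last first.
  rewrite summxE big1 // => e _.
  by rewrite !mxE !eq_mxvec_index [k == c]eq_sym ck andbF mulr0.
rewrite summxE (big_only (i0 := l)) => [|e /negbTE el]; last first.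
  by rewrite !mxE !eq_mxvec_index [l == e]eq_sym el !andbF mulr0.
by rewrite !mxE !eqxx mulr1.
Qed.

Lemma tens_mapE m1 n1 m2 n2 (L1 : 'M[C]_m1 -> 'M[C]_n1)
    (L2 : 'M[C]_m2 -> 'M[C]_n2) X i' j' k' l' :
  tens_map L1 L2 X (mxvec_index i' k') (mxvec_index j' l') =
  \sum_i \sum_j \sum_k \sum_l X (mxvec_index i k) (mxvec_index j l) *
      (L1 (delta_mx i j) i' j' * L2 (delta_mx k l) k' l').
Proof.
rewrite /tens_map summxE; apply: eq_bigr => i _; rewrite summxE.
apply: eq_bigr => j _; rewrite summxE; apply: eq_bigr => k _; rewrite summxE.
by apply: eq_bigr => l _; rewrite mxE kronmxE.
Qed.

Lemma tens_map_sum m1 n1 m2 n2 (L1 : 'M[C]_m1 -> 'M[C]_n1)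
    (L2 : 'M[C]_m2 -> 'M[C]_n2) d (X : 'I_d -> 'M[C]_(m1 * m2)) :
  \sum_t tens_map L1 L2 (X t) = tens_map L1 L2 (\sum_t X t).
Proof.
apply/matrixP => p q.
case/mxvec_indexP: p => i' k'; case/mxvec_indexP: q => j' l'.
rewrite summxE; under eq_bigr do rewrite tens_mapE.
rewrite tens_mapE exchange_big; apply: eq_bigr => i _.
rewrite exchange_big; apply: eq_bigr => j _.
rewrite exchange_big; apply: eq_bigr => k _.
rewrite exchange_big; apply: eq_bigr => l _.
by rewrite summxE mulr_suml.
Qed.

Lemma tens_map1 m1 n1 m2 n2 (L1 : {linear 'M[C]_m1 -> 'M[C]_n1})
    (L2 : {linear 'M[C]_m2 -> 'M[C]_n2}) :
  unital L1 -> unital L2 -> tens_map L1 L2 1%:M = 1%:M.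
Proof.
move=> U1 U2; apply/matrixP => p q.
case/mxvec_indexP: p => i' k'; case/mxvec_indexP: q => j' l'.
have diag i k : \sum_j \sum_l (1%:M : 'M[C]_(m1 * m2))
      (mxvec_index i k) (mxvec_index j l) *
      (L1 (delta_mx i j) i' j' * L2 (delta_mx k l) k' l') =
    L1 (delta_mx i i) i' j' * L2 (delta_mx k k) k' l'.
  rewrite (big_only (i0 := i)) => [|j /negbTE ji]; last first.
    by apply: big1 => l _; rewrite mxE eq_mxvec_index [i == j]eq_sym ji mul0r.
  rewrite (big_only (i0 := k)) => [|l /negbTE lk]; last first.
    by rewrite mxE eq_mxvec_index [k == l]eq_sym lk andbF mul0r.
  by rewrite mxE eqxx mul1r.
rewrite tens_mapE.
under eq_bigr do rewrite exchange_big /=.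
under eq_bigr do under eq_bigr do rewrite diag.
rewrite [RHS]mxE eq_mxvec_index.
have -> : ((i' == j') && (k' == l'))%:R =
    (1%:M : 'M[C]_n1) i' j' * (1%:M : 'M[C]_n2) k' l'.
  by rewrite !mxE -natrM mulnb.
rewrite -U1 -U2 (mx1_sum_delta C m1) (mx1_sum_delta C m2) !linear_sum !summxE.
by rewrite mulr_suml; apply: eq_bigr => i _; rewrite mulr_sumr.
Qed.

Lemma qformE n (v w : 'cV[C]_n) (A : 'M[C]_n) :
  (adjmx v *m A *m w) 0 0 = \sum_a \sum_b (v a 0)^* * A a b * w b 0.
Proof.
rewrite mxE [RHS]exchange_big; apply: eq_bigr => b _.
by rewrite mxE mulr_suml; apply: eq_bigr => a _; rewrite !mxE.
Qed.

Definition swap_index m n (p : 'I_(n * m)) : 'I_(m * n) :=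
  let ik := enum_val (cast_ord (esym (mxvec_cast n m)) p) in
  mxvec_index ik.2 ik.1.

Lemma swap_indexE m n (i : 'I_m) (k : 'I_n) :
  swap_index (mxvec_index k i) = mxvec_index i k.
Proof. by rewrite /swap_index cast_ordK enum_rankK. Qed.

Definition swapmx m n (Y : 'M[C]_(m * n)) : 'M[C]_(n * m) :=
  \matrix_(p, q) Y (swap_index p) (swap_index q).

Lemma psd_swapmx m n (Y : 'M[C]_(m * n)) : psdmx Y -> psdmx (swapmx Y).
Proof.
move=> psdY v; pose w : 'cV[C]_(m * n) := \col_p v (swap_index p) 0.
suff -> : (adjmx v *m swapmx Y *m v) 0 0 = (adjmx w *m Y *m w) 0 0 by [].
rewrite !qformE sum_mxvec_index [RHS]sum_mxvec_index exchange_big /=.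
apply: eq_bigr => i _; apply: eq_bigr => k _.
rewrite sum_mxvec_index [RHS]sum_mxvec_index exchange_big /=.
by apply: eq_bigr => j _; apply: eq_bigr => l _; rewrite !mxE !swap_indexE.
Qed.

Lemma sum_delta_mxE m p q (G : 'I_m -> 'I_m -> 'I_p -> 'I_q -> C)
    (H : 'I_p -> 'I_q -> C) a b :
  \sum_i \sum_j \sum_k \sum_l G i j k l * ((@delta_mx C m m i j) a b * H k l) =
  \sum_k \sum_l G a b k l * H k l.
Proof.
have factor i j :
    \sum_k \sum_l G i j k l * ((@delta_mx C m m i j) a b * H k l) =
    delta_mx i j a b * \sum_k \sum_l G i j k l * H k l.
  rewrite mulr_sumr; apply: eq_bigr => k _.
  by rewrite mulr_sumr; apply: eq_bigr => l _; ring.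
under eq_bigr do under eq_bigr do rewrite factor.
rewrite (big_only (i0 := a)) => [|i /negbTE ia]; last first.
  by apply: big1 => j _; rewrite mxE [a == i]eq_sym ia mul0r.
rewrite (big_only (i0 := b)) => [|j /negbTE jb]; last first.
  by rewrite mxE [b == j]eq_sym jb andbF mul0r.
by rewrite mxE !eqxx mul1r.
Qed.

Lemma tens_map_swap m1 n1 m2 n2 (L1 : 'M[C]_m1 -> 'M[C]_n1)
    (L2 : 'M[C]_m2 -> 'M[C]_n2) X :
  tens_map L1 L2 X =
  swapmx (tens_map (@id 'M[C]_n2) L1 (swapmx (tens_map (@id 'M[C]_m1) L2 X))).
Proof.
apply/matrixP => p q.
case/mxvec_indexP: p => i' k'; case/mxvec_indexP: q => j' l'.
rewrite mxE !swap_indexE [RHS]tens_mapE [RHS]sum_delta_mxE tens_mapE.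
apply: eq_bigr => i _; apply: eq_bigr => j _.
rewrite mxE !swap_indexE tens_mapE sum_delta_mxE mulr_suml.
apply: eq_bigr => k _; rewrite mulr_suml.
by apply: eq_bigr => l _; rewrite -mulrA [L2 _ _ _ * _]mulrC.
Qed.

Lemma tens_map_psd m1 n1 m2 n2 (L1 : 'M[C]_m1 -> 'M[C]_n1)
    (L2 : 'M[C]_m2 -> 'M[C]_n2) X :
  completely_positive L1 -> completely_positive L2 ->
  psdmx X -> psdmx (tens_map L1 L2 X).
Proof.
move=> cp1 cp2 psdX; rewrite tens_map_swap.
by apply/psd_swapmx/cp1/psd_swapmx/cp2.
Qed.

Lemma tens_map_POVM m1 n1 m2 n2 d (L1 : {linear 'M[C]_m1 -> 'M[C]_n1})
    (L2 : {linear 'M[C]_m2 -> 'M[C]_n2}) (F : 'I_d -> 'M[C]_(m1 * m2)) :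
  cp_unital L1 -> cp_unital L2 -> is_POVM F ->
  is_POVM (fun j => tens_map L1 L2 (F j)).
Proof.
move=> [cp1 u1] [cp2 u2] [psdF sumF]; split.
  by move=> j; apply: tens_map_psd.
by rewrite tens_map_sum sumF tens_map1.
Qed.

End TensorMaps.

Section Measurements.
Variable C : numClosedFieldType.

Definition qform n (A : 'M[C]_n) (v w : 'cV[C]_n) := (adjmx v *m A *m w) 0 0.

Lemma adjmxD m n (A B : 'M[C]_(m, n)) : adjmx (A + B) = adjmx A + adjmx B.
Proof. by apply/matrixP => i j; rewrite !mxE rmorphD. Qed.

Lemma adjmxZ m n (a : C) (A : 'M[C]_(m, n)) : adjmx (a *: A) = a^* *: adjmx A.
Proof. by apply/matrixP => i j; rewrite !mxE rmorphM. Qed.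

Lemma adjmxM m n p (A : 'M[C]_(m, n)) (B : 'M[C]_(n, p)) :
  adjmx (A *m B) = adjmx B *m adjmx A.
Proof. by rewrite /adjmx map_mxM trmx_mul. Qed.

Lemma qformD_scale n (A : 'M[C]_n) u w t :
  qform A (u + t *: w) (u + t *: w) =
  qform A u u + t^* * qform A w u + t * qform A u w + t^* * t * qform A w w.
Proof.
rewrite /qform adjmxD adjmxZ !mulmxDl !mulmxDr -!scalemxAl -!scalemxAr !mxE.
ring.
Qed.

Lemma real_quadratic_ge0_lin_eq0 (x c : C) : 0 <= c ->
  (forall s : C, s \is Num.real -> 0 <= s * x + s ^+ 2 * c) -> x = 0.
Proof.
move=> c_ge0 quad_ge0.
have c_real : c \is Num.real by apply: ger0_real.
have x_real : x \is Num.real.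
  have := quad_ge0 1 (real1 C); rewrite mul1r expr1n mul1r => /ger0_real xc.
  by have := rpredB xc c_real; rewrite addrK.
have c1_gt0 : 0 < c + 1 by apply: ltr_wpDl.
have c1_neq0 : c + 1 != 0 by rewrite gt_eqF.
(* s = -x / (c + 1) rather than the minimiser -x / (2 c), as c may vanish *)
pose s := - x / (c + 1).
have s_real : s \is Num.real by rewrite rpredM ?rpredN // rpredV rpredD ?real1.
have := quad_ge0 s s_real.
have -> : s * x + s ^+ 2 * c = - (x ^+ 2 / (c + 1) ^+ 2) by rewrite /s; field.
rewrite oppr_ge0 => le0.
have ge0 : 0 <= x ^+ 2 / (c + 1) ^+ 2.
  by rewrite mulr_ge0 ?real_exprn_even_ge0 // invr_ge0 exprn_ge0 // ltW.
have /eqP : x ^+ 2 / (c + 1) ^+ 2 = 0 by apply/le_anti; rewrite le0 ge0.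
by rewrite mulf_eq0 invr_eq0 !expf_eq0 /= (negbTE c1_neq0) orbF => /eqP.
Qed.

Lemma psdmx_qform_eq0 n (A : 'M[C]_n) u :
  psdmx A -> qform A u u = 0 -> A *m u = 0.
Proof.
move=> psdA Au0.
have qform_eq0 w : qform A w u = 0.
  have c_ge0 : 0 <= qform A w w by apply: psdA.
  have ab0 : qform A w u + qform A u w = 0.
    apply: (real_quadratic_ge0_lin_eq0 c_ge0) => s s_real.
    have := psdA (u + s *: w); rewrite -/(qform A _ _) qformD_scale Au0.
    by rewrite (conj_Creal s_real); congr (_ <= _); ring.
  have iab0 : 'i * (qform A u w - qform A w u) = 0.
    apply: (real_quadratic_ge0_lin_eq0 c_ge0) => s s_real.
    have conj_si : (s * 'i)^* = - (s * 'i).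
      by rewrite rmorphM /= conjCi (conj_Creal s_real) mulrN.
    have ii : 'i * 'i = -1 :> C by rewrite -expr2 sqrCi.
    have := psdA (u + (s * 'i) *: w).
    rewrite -/(qform A _ _) qformD_scale Au0 conj_si.
    have -> : - (s * 'i) * (s * 'i) * qform A w w =
        - (s ^+ 2 * qform A w w) * ('i * 'i) by ring.
    by rewrite ii; congr (_ <= _); ring.
  move/eqP: iab0; rewrite mulf_eq0 (negbTE (neq0Ci C)) /= subr_eq0 => /eqP ba.
  move/eqP: ab0; rewrite ba -mulr2n -mulr_natr mulf_eq0 pnatr_eq0 orbF.
  by move/eqP.
apply/matrixP => r z; rewrite (ord1 z) [RHS]mxE -(qform_eq0 (delta_mx r 0)).
rewrite /qform qformE mxE [RHS](big_only (i0 := r)) => [|a /negbTE ar].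
  by apply: eq_bigr => b _; rewrite !mxE !eqxx conjC1 mul1r.
by apply: big1 => b _; rewrite !mxE ar conjC0 !mul0r.
Qed.

Section Projector.
Variables (n : nat) (Q : 'M[C]_n).
Hypotheses (Q_herm : adjmx Q = Q) (Q_idem : Q *m Q = Q).

Lemma mxtrace_mul_proj (A : 'M[C]_n) :
  \tr (A *m Q) = \sum_i qform A (col i (adjmx Q)) (col i (adjmx Q)).
Proof.
have -> : A *m Q = A *m (adjmx Q *m Q) by rewrite Q_herm Q_idem.
rewrite mulmxA mxtrace_mulC; apply: eq_bigr => i _.
rewrite /qform qformE mxE; apply: eq_bigr => a _.
by rewrite mxE mulr_sumr; apply: eq_bigr => b _; rewrite !mxE conjCK mulrA.
Qed.

Lemma mxtrace_mul_proj_ge0 (A : 'M[C]_n) : psdmx A -> 0 <= \tr (A *m Q).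
Proof.
by move=> psdA; rewrite mxtrace_mul_proj sumr_ge0 // => i _; apply: psdA.
Qed.

Lemma mxtrace_mul_proj_eq0 (A : 'M[C]_n) :
  psdmx A -> \tr (A *m Q) = 0 -> A *m Q = 0.
Proof.
move=> psdA; rewrite mxtrace_mul_proj => /psumr_eq0P qform0.
have {}qform0 i := qform0 (fun i _ => psdA (col i (adjmx Q))) i isT.
apply/matrixP => r i.
have /matrixP /(_ r 0) Aci0 := psdmx_qform_eq0 psdA (qform0 i).
transitivity ((A *m col i (adjmx Q)) r 0); last by rewrite Aci0 !mxE.
by rewrite -[in LHS]Q_herm !mxE; apply: eq_bigr => b _; rewrite !mxE.
Qed.

Lemma psdmx_proj : psdmx Q.
Proof.
move=> v; have -> : adjmx v *m Q *m v = adjmx (Q *m v) *m (Q *m v).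
  by rewrite adjmxM Q_herm -mulmxA -[in LHS]Q_idem !mulmxA.
by rewrite mxE sumr_ge0 // => i _; rewrite !mxE mulrC mul_conjC_ge0.
Qed.

Lemma projC :
  adjmx (1%:M - Q) = 1%:M - Q /\ (1%:M - Q) *m (1%:M - Q) = 1%:M - Q.
Proof.
split; last by rewrite mulmxBl !mulmxBr !mul1mx mulmx1 Q_idem subrr subr0.
apply/matrixP => i j; move/matrixP: Q_herm => /(_ i j); rewrite !mxE => <-.
by rewrite rmorphB rmorph_nat eq_sym.
Qed.

End Projector.

Variables (n d : nat) (A P : 'I_d -> 'M[C]_n).
Hypotheses (A_POVM : is_POVM A) (P_proj : is_projective_measurement P).

Lemma projective_measurement_orth j k : j != k -> P j *m P k = 0.
Proof.
have [P_herm_idem sumP] := P_proj.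
have [Pk_herm Pk_idem] := P_herm_idem k.
have psdP i : psdmx (P i).
  by apply: psdmx_proj; [exact: (P_herm_idem i).1 | exact: (P_herm_idem i).2].
have ge0 i : 0 <= \tr (P i *m P k) by apply: mxtrace_mul_proj_ge0.
have others0 : \sum_(i | i != k) \tr (P i *m P k) = 0.
  have := congr1 (fun M => \tr (M *m P k)) sumP.
  rewrite /= mulmx_suml linear_sum /= (bigD1 k) //= mul1mx Pk_idem.
  by move=> E; apply: (addrI (\tr (P k))); rewrite E addr0.
move=> jk; apply: mxtrace_mul_proj_eq0 => //.
exact: psumr_eq0P (fun i _ => ge0 i) others0 j jk.
Qed.

Lemma POVM_proj_success :
  \sum_j \tr (A j *m P j) = n%:R - \sum_j \tr (A j *m (1%:M - P j)).
Proof.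
have [_ sumA] := A_POVM.
under [X in _ = _ - X]eq_bigr do rewrite mulmxBr mulmx1 linearB.
have trA : \sum_j \tr (A j) = n%:R by rewrite -linear_sum /= sumA mxtrace1.
by rewrite sumrB trA opprB addrC subrK.
Qed.

Lemma POVM_proj_failure_ge0 j : 0 <= \tr (A j *m (1%:M - P j)).
Proof.
have [Pj_herm Pj_idem] := projC (P_proj.1 j).1 (P_proj.1 j).2.
exact: mxtrace_mul_proj_ge0 (A_POVM.1 j).
Qed.

Lemma POVM_proj_success_le : \sum_j \tr (A j *m P j) <= n%:R.
Proof.
rewrite POVM_proj_success gerBl sumr_ge0 // => j _.
exact: POVM_proj_failure_ge0.
Qed.

Lemma POVM_proj_success_eq :
  \sum_j \tr (A j *m P j) = n%:R -> forall j, A j = P j.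
Proof.
rewrite POVM_proj_success => /eqP; rewrite subr_eq addrC -subr_eq subrr eq_sym.
move=> /eqP /psumr_eq0P failure0.
have AP j : A j *m P j = A j.
  have [Pj_herm Pj_idem] := projC (P_proj.1 j).1 (P_proj.1 j).2.
  have := mxtrace_mul_proj_eq0 Pj_herm Pj_idem (A_POVM.1 j)
    (failure0 (fun j _ => POVM_proj_failure_ge0 j) j isT).
  by rewrite mulmxBr mulmx1 => /eqP; rewrite subr_eq0 => /eqP.
move=> k; rewrite -[RHS]mul1mx -A_POVM.2 mulmx_suml (bigD1 k) //= AP.
rewrite big1 ?addr0 // => j jk.
by rewrite -(AP j) -mulmxA projective_measurement_orth ?mulmx0.
Qed.

End Measurements.

Theorem mainTheorem5 (C : numClosedFieldType) (b1 b2 b1' b2' d : nat)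
  (F : 'I_d -> 'M[C]_(b1 * b2)) (P : 'I_d -> 'M[C]_(b1' * b2')) :
  is_projective_measurement P -> is_POVM F ->
  (forall (L1 : {linear 'M[C]_b1 -> 'M[C]_b1'})
          (L2 : {linear 'M[C]_b2 -> 'M[C]_b2'}),
      cp_unital L1 -> cp_unital L2 -> Qval F P L1 L2 <= 1) /\
  ((exists (L1 : {linear 'M[C]_b1 -> 'M[C]_b1'})
           (L2 : {linear 'M[C]_b2 -> 'M[C]_b2'}),
      cp_unital L1 /\ cp_unital L2 /\ Qval F P L1 L2 = 1) ->
   exists (L1 : {linear 'M[C]_b1 -> 'M[C]_b1'})
          (L2 : {linear 'M[C]_b2 -> 'M[C]_b2'}),
      cp_unital L1 /\ cp_unital L2 /\
      forall j, tens_map L1 L2 (F j) = P j).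
Proof.
move=> P_proj F_POVM; set N : C := (b1' * b2')%:R.
split=> [L1 L2 cpu1 cpu2 | [L1 [L2 [cpu1 [cpu2 Q1]]]]].
  rewrite /Qval -/N; have [->|N_neq0] := eqVneq N 0.
    by rewrite invr0 mul0r ler01.
  rewrite ler_pdivrMl ?lt_def ?N_neq0 ?ler0n // mulr1.
  exact: POVM_proj_success_le (tens_map_POVM cpu1 cpu2 F_POVM) P_proj.
exists L1, L2; split=> //; split=> //.
apply: POVM_proj_success_eq (tens_map_POVM cpu1 cpu2 F_POVM) P_proj _.
have N_neq0 : N != 0.
  apply/eqP=> N0; move: Q1; rewrite /Qval -/N N0 invr0 mul0r => /eqP.
  by rewrite eq_sym oner_eq0.
by move: Q1; rewrite /Qval -/N => /(congr1 ( *%R N)); rewrite mulVKf // mulr1.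
Qed.
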